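(* Let $R=\bigoplus_{n\ge 0} R_n$ be a graded (commutative Noetherian) ring, let $M$ be a finitely generated graded $R$-module, let $x\in R_1$ be a non-nilpotent element, and let $A=R/(1-x)R$. Then $\operatorname{tr}_R(M)A=\operatorname{tr}_A(M\otimes_R A)$. In particular, if $x$ is a non-zerodivisor on $R/\operatorname{tr}_R(M)$, then $\operatorname{tr}_R(M)$ is a prime (resp. primary, resp. radical) ideal of $R$ if and only if $\operatorname{tr}_A(M\otimes_R A)$ is a prime (resp. primary, resp. radical) ideal of $A$.
   Context: All rings are commutative and Noetherian. For a ring $S$ and an $S$-module $N$, the trace ideal of $N$ is $\operatorname{tr}_S(N)=\sum_{f\in\operatorname{Hom}_S(N,S)}\operatorname{Im} f$. *)

From mathcomp Require Import all_boot all_order all_algebra.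
Set Implicit Arguments. Unset Strict Implicit. Unset Printing Implicit Defensive.
Import GRing.Theory.
Local Open Scope ring_scope.

Definition is_ideal (S : comPzRingType) (I : S -> Prop) : Prop :=
  [/\ I 0, (forall a b, I a -> I b -> I (a + b)) & (forall r a, I a -> I (r * a))].

Definition noetherian (S : comPzRingType) : Prop :=
  forall I : S -> Prop, is_ideal I ->
    exists (n : nat) (g : 'I_n -> S), (forall i, I (g i)) /\
      (forall a, I a <-> exists c : 'I_n -> S, a = \sum_(i < n) c i * g i).

Definition fin_gen (S : comPzRingType) (V : lmodType S) : Prop :=
  exists (n : nat) (g : 'I_n -> V),
    forall v, exists c : 'I_n -> S, v = \sum_(i < n) c i *: g i.

Definition graded_ring (S : comPzRingType) (Rn : nat -> S -> Prop) : Prop :=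
  [/\ (forall n, Rn n 0) /\
      (forall n a b, Rn n a -> Rn n b -> Rn n (a - b)),
      Rn 0%N 1,
      (forall i j a b, Rn i a -> Rn j b -> Rn (i + j)%N (a * b)),
      (forall r, exists (s : seq nat) (c : nat -> S),
          uniq s /\ (forall i, Rn i (c i)) /\ r = \sum_(i <- s) c i) &
      (forall (s : seq nat) (c : nat -> S), uniq s -> (forall i, Rn i (c i)) ->
          \sum_(i <- s) c i = 0 -> forall i, i \in s -> c i = 0)].

Definition graded_module (S : comPzRingType) (Rn : nat -> S -> Prop)
    (V : lmodType S) (Mn : int -> V -> Prop) : Prop :=
  [/\ (forall n, Mn n 0),
      (forall n u v, Mn n u -> Mn n v -> Mn n (u - v)),
      (forall (i : nat) (j : int) a u, Rn i a -> Mn j u -> Mn (i%:Z + j) (a *: u)),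
      (forall v, exists (s : seq int) (c : int -> V),
          uniq s /\ (forall i, Mn i (c i)) /\ v = \sum_(i <- s) c i) &
      (forall (s : seq int) (c : int -> V), uniq s -> (forall i, Mn i (c i)) ->
          \sum_(i <- s) c i = 0 -> forall i, i \in s -> c i = 0)].

Definition is_hom (S : comPzRingType) (V : lmodType S) (f : V -> S) : Prop :=
  forall a u v, f (a *: u + v) = a * f u + f v.

Definition trace_ideal (S : comPzRingType) (V : lmodType S) (s : S) : Prop :=
  exists (n : nat) (f : 'I_n -> V -> S) (v : 'I_n -> V),
    (forall i, is_hom (f i)) /\ s = \sum_(i < n) f i (v i).

(* Extension I A of an ideal I of S along phi : S -> T:
   the ideal of T generated by phi(I). *)
Definition ext_ideal (S T : comPzRingType) (phi : S -> T) (I : S -> Prop) (t : T) : Prop :=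
  exists (n : nat) (b : 'I_n -> T) (r : 'I_n -> S),
    (forall i, I (r i)) /\ t = \sum_(i < n) b i * phi (r i).

Definition prime_ideal (S : comPzRingType) (I : S -> Prop) : Prop :=
  ~ I 1 /\ forall a b, I (a * b) -> I a \/ I b.

Definition primary_ideal (S : comPzRingType) (I : S -> Prop) : Prop :=
  ~ I 1 /\ forall a b, I (a * b) -> ~ I a -> exists n : nat, I (b ^+ n).

Definition radical_ideal (S : comPzRingType) (I : S -> Prop) : Prop :=
  forall (a : S) (n : nat), I (a ^+ n) -> I a.

From mathcomp Require Import all_boot all_order all_algebra.
From mathcomp Require Import ring zify.
From Stdlib Require Import IndefiniteDescription Classical.
Import GRing.Theory.
Local Open Scope ring_scope.

Set Implicit Arguments. Unset Strict Implicit. Unset Printing Implicit Defensive.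

(* Since [x] has degree 1 and maps to 1 in [A = R/(1-x)R], every element of [A]
   is the image of a homogeneous element of [R], and a homogeneous [y] lying in
   [(1-x)R + P], for a homogeneous ideal [P], satisfies [x^k y \in P] for some [k].
   With [P = 0], the lifts to [R] of the values of a linear form [N -> A] on
   homogeneous generators of [M] violate the homogeneous relations only by
   [x]-torsion, which one power [x^K] kills as [R] is Noetherian; hence every
   linear form on [N] lifts and [tr_A(N) = tr_R(M)A].
   With [P = tr_R(M)], which is homogeneous because every linear form on a
   finitely generated graded module is a finite sum of homogeneous ones, and [x]
   a non-zerodivisor modulo [P], a homogeneous element lies in [tr_R(M)] iff its
   image lies in [tr_A(N)]. Being prime, primary or radical can be tested on
   homogeneous elements for a homogeneous ideal, so these properties transfer. *)

Lemma big_nat_widen0 (V : nmodType) B L (c : nat -> V) :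
  (forall i, (B <= i)%N -> c i = 0) -> (B <= L)%N ->
  \sum_(0 <= i < L) c i = \sum_(0 <= i < B) c i.
Proof.
move=> c0 BL; rewrite (big_cat_nat (leq0n B) BL) /= [X in _ + X]big1_seq ?addr0 //.
by move=> i /andP[_]; rewrite mem_index_iota => /andP[/c0].
Qed.

Lemma big_nat_delta (V : nmodType) L k (v : V) : (k < L)%N ->
  \sum_(0 <= j < L) (if j == k then v else 0) = v.
Proof.
move=> kL; rewrite (bigD1_seq k) ?mem_index_iota ?iota_uniq //= eqxx big1 ?addr0 //.
by move=> j /negbTE ->.
Qed.

Lemma exists_max_nat (P : nat -> Prop) B : (exists j, P j) -> (forall j, P j -> (j < B)%N) ->
  exists p, P p /\ forall j, (p < j)%N -> ~ P j.
Proof.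
elim: B => [[j Pj] /(_ j Pj)//|B IH exP ltB].
case: (classic (P B)) => PB; first by exists B; split => // j Bj /ltB; lia.
apply: IH => // j Pj; have := ltB j Pj; rewrite ltnS leq_eqVlt => /orP[/eqP jB|//].
by rewrite jB in Pj.
Qed.

Section Ideal.
Variables (S : comPzRingType) (I : S -> Prop).
Hypothesis HI : is_ideal I.

Lemma ideal0 : I 0. Proof. by case: HI. Qed.

Lemma idealD a b : I a -> I b -> I (a + b).
Proof. by case: HI => _ H _; apply: H. Qed.

Lemma idealMl r a : I a -> I (r * a).
Proof. by case: HI => _ _ H; apply: H. Qed.

Lemma idealMr r a : I a -> I (a * r).
Proof. by rewrite mulrC; apply: idealMl. Qed.

Lemma idealN a : I a -> I (- a).
Proof. by rewrite -mulN1r; apply: idealMl. Qed.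

Lemma idealB a b : I a -> I b -> I (a - b).
Proof. by move=> Ia Ib; apply/idealD/idealN. Qed.

Lemma ideal_sum (T : Type) (s : seq T) (P : pred T) (F : T -> S) :
  (forall i, P i -> I (F i)) -> I (\sum_(i <- s | P i) F i).
Proof. by move=> IF; apply: big_ind => //; [apply: ideal0 | apply: idealD]. Qed.

Lemma ideal_subX a b n : I (a - b) -> I (a ^+ n - b ^+ n).
Proof.
move=> Iab; elim: n => [|n IH]; first by rewrite !expr0 subrr; apply: ideal0.
have -> : a ^+ n.+1 - b ^+ n.+1 = a * (a ^+ n - b ^+ n) + b ^+ n * (a - b).
  by rewrite !exprS; ring.
by apply/idealD/idealMl/Iab/idealMl.
Qed.

Lemma ideal_nilD a b n m : I (a ^+ n) -> I (b ^+ m) -> I ((a + b) ^+ (n + m)).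
Proof.
move=> Ian Ibm; rewrite exprDn; apply: ideal_sum => i _; rewrite -mulr_natl; apply: idealMl.
case: (leqP m i) => mi.
  have -> : b ^+ i = b ^+ (i - m) * b ^+ m by rewrite -exprD subnK.
  by rewrite mulrA; apply: idealMl.
have -> : a ^+ (n + m - i) = a ^+ (n + m - i - n) * a ^+ n by rewrite -exprD subnK //; lia.
by rewrite mulrAC; apply: idealMl.
Qed.

Lemma ideal_nil_sum (T : eqType) (s : seq T) (F : T -> S) :
  (forall j, j \in s -> exists n, I (F j ^+ n)) -> exists n, I ((\sum_(j <- s) F j) ^+ n).
Proof.
elim: s => [|j s IH] nilF; first by exists 1%N; rewrite big_nil expr1; apply: ideal0.
have [n1 In1] := nilF j (mem_head _ _).
have [n2 In2] : exists n, I ((\sum_(j <- s) F j) ^+ n).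
  by apply: IH => j' sj'; apply: nilF; rewrite inE sj' orbT.
by exists (n1 + n2)%N; rewrite big_cons; apply: ideal_nilD.
Qed.

End Ideal.

Section Hom.
Variables (S : comPzRingType) (V : lmodType S).
Implicit Types (f : V -> S).

Lemma hom0 f : is_hom f -> f 0 = 0.
Proof.
move=> Hf; have := Hf 1 0 0; rewrite scaler0 addr0 mul1r => E.
by apply: (addrI (f 0)); rewrite addr0 -E.
Qed.

Lemma homD f u v : is_hom f -> f (u + v) = f u + f v.
Proof. by move=> Hf; rewrite -{1}(scale1r u) Hf mul1r. Qed.

Lemma homZ f a u : is_hom f -> f (a *: u) = a * f u.
Proof. by move=> Hf; rewrite -(addr0 (a *: u)) Hf (hom0 Hf) addr0. Qed.

Lemma homB f u v : is_hom f -> f (u - v) = f u - f v.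
Proof. by move=> Hf; rewrite (homD _ _ Hf) -scaleN1r (homZ _ _ Hf) mulN1r. Qed.

Lemma hom_sum f (I : Type) (s : seq I) (P : pred I) (F : I -> V) : is_hom f ->
  f (\sum_(i <- s | P i) F i) = \sum_(i <- s | P i) f (F i).
Proof.
move=> Hf; apply: (big_ind2 (fun u v => f u = v)); first exact: hom0.
  by move=> ? ? ? ? <- <-; rewrite (homD _ _ Hf).
by [].
Qed.

Lemma trace_hom f v : is_hom f -> trace_ideal V (f v).
Proof. by move=> Hf; exists 1%N, (fun _ => f), (fun _ => v); rewrite big_ord1. Qed.

Lemma trace_ideal_ideal : is_ideal (trace_ideal V).
Proof.
split.
- exists 0%N, (fun _ _ => 0), (fun _ => 0); split; last by rewrite big_ord0.
  by move=> i a u v; rewrite mulr0 addr0.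
- move=> _ _ [n1 [f1 [v1 [H1 ->]]]] [n2 [f2 [v2 [H2 ->]]]].
  exists (n1 + n2)%N, (fun i => match split i with inl j => f1 j | inr j => f2 j end),
    (fun i => match split i with inl j => v1 j | inr j => v2 j end); split.
    by move=> i; case: (split i).
  rewrite big_split_ord /=; congr (_ + _); apply: eq_bigr => j _.
    by rewrite -[lshift _ j]/(unsplit (inl j)) unsplitK.
  by rewrite -[rshift _ j]/(unsplit (inr j)) unsplitK.
move=> r _ [n [f [v [Hf ->]]]]; exists n, f, (fun i => r *: v i); split => //.
by rewrite mulr_sumr; apply: eq_bigr => i _; rewrite (homZ _ _ (Hf i)).
Qed.

Lemma hom_of_generators (T : finType) (m : T -> V) (g : T -> S) :
  (forall v, exists c : T -> S, v = \sum_t c t *: m t) ->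
  (forall c : T -> S, \sum_t c t *: m t = 0 -> \sum_t c t * g t = 0) ->
  exists phi : V -> S, is_hom phi /\ forall c, phi (\sum_t c t *: m t) = \sum_t c t * g t.
Proof.
move=> span rel; have [C HC] := functional_choice _ span.
have well_def c : \sum_t c t *: m t = \sum_t C (\sum_t c t *: m t) t *: m t ->
    \sum_t C (\sum_t c t *: m t) t * g t = \sum_t c t * g t.
  move=> E; apply/eqP; rewrite -subr_eq0 -sumrB; apply/eqP.
  under eq_bigr do rewrite -mulrBl.
  by apply: rel; under eq_bigr do rewrite scalerBl; rewrite sumrB -E subrr.
exists (fun v => \sum_t C v t * g t); split; last by move=> c; apply/well_def/HC.
move=> a u v; rewrite {1}(HC u) {1}(HC v).
have -> : a *: (\sum_t C u t *: m t) + \sum_t C v t *: m t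
    = \sum_t (a * C u t + C v t) *: m t.
  by rewrite scaler_sumr -big_split; apply: eq_bigr => t _; rewrite scalerA scalerDl.
rewrite well_def; last exact: HC.
by rewrite mulr_sumr -big_split; apply: eq_bigr => t _; rewrite mulrDl mulrA.
Qed.

End Hom.

Lemma torsion_bounded (S : comPzRingType) (x : S) : noetherian S ->
  exists K, forall z, (exists k, x ^+ k * z = 0) -> x ^+ K * z = 0.
Proof.
move=> noethS; pose tors z := exists k, x ^+ k * z = 0.
have tors_ideal : is_ideal tors.
  split; first by exists 0%N; rewrite mulr0.
    move=> a b [ka Ha] [kb Hb]; exists (ka + kb)%N.
    have -> : x ^+ (ka + kb) * (a + b) = x ^+ kb * (x ^+ ka * a) + x ^+ ka * (x ^+ kb * b).
      by rewrite exprD; ring.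
    by rewrite Ha Hb !mulr0 addr0.
  by move=> r a [k Ha]; exists k; rewrite mulrCA Ha mulr0.
have [n [g [tors_g gen_g]]] := noethS _ tors_ideal.
have [k Hk] := functional_choice _ tors_g.
exists (\max_i k i)%N => z /gen_g [c ->]; rewrite mulr_sumr big1 // => i _.
have /subnK <- : (k i <= \max_i k i)%N by apply: (@leq_bigmax _ k).
by rewrite exprD mulrCA -mulrA Hk !mulr0.
Qed.

Section GradedRing.
Variables (R : comPzRingType) (Rn : nat -> R -> Prop).
Hypothesis HR : graded_ring Rn.

Lemma grade0 n : Rn n 0. Proof. by case: HR => [[]]. Qed.

Lemma gradeB n a b : Rn n a -> Rn n b -> Rn n (a - b).
Proof. by case: HR => [[_ H]] *; apply: H. Qed.

Lemma gradeN n a : Rn n a -> Rn n (- a).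
Proof. by move=> Ha; rewrite -sub0r; apply: gradeB => //; apply: grade0. Qed.

Lemma gradeD n a b : Rn n a -> Rn n b -> Rn n (a + b).
Proof. by move=> Ha Hb; rewrite -(opprK b); apply/gradeB/gradeN. Qed.

Lemma grade1 : Rn 0 1. Proof. by case: HR. Qed.

Lemma gradeM i j a b : Rn i a -> Rn j b -> Rn (i + j) (a * b).
Proof. by case: HR => _ _ H _ _; apply: H. Qed.

Lemma gradeX d n a : Rn d a -> Rn (n * d) (a ^+ n).
Proof.
move=> Ha; elim: n => [|n IH]; first by rewrite expr0 mul0n; apply: grade1.
by rewrite exprS mulSn; apply: gradeM.
Qed.

Lemma grade_sum n (I : Type) (s : seq I) (P : pred I) (F : I -> R) :
  (forall i, P i -> Rn n (F i)) -> Rn n (\sum_(i <- s | P i) F i).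
Proof.
by move=> HF; elim/big_rec: _ => [|i y Pi Hy]; [apply: grade0 | apply: gradeD (HF _ Pi) Hy].
Qed.

Definition is_hdecomp (r : R) (B : nat) (c : nat -> R) :=
  [/\ forall i, Rn i (c i), forall i, (B <= i)%N -> c i = 0
    & r = \sum_(0 <= i < B) c i].

Lemma hdecomp_exists r : exists Bc : nat * (nat -> R), is_hdecomp r Bc.1 Bc.2.
Proof.
case: HR => _ _ _ decomp _; have [s [c [us [Hc ->]]]] := decomp r.
pose B := (\max_(i <- s) i).+1.
have sB i : i \in s -> (i < B)%N by move=> si; rewrite ltnS (leq_bigmax_seq _ si).
exists (B, fun i => if i \in s then c i else 0); split => /=.
- by move=> i; case: ifP => _; [apply: Hc | apply: grade0].
- by move=> i Bi; case: ifP => // /sB; rewrite ltnNge Bi.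
rewrite -big_mkcond -[RHS]big_filter; apply/perm_big/uniq_perm => //.
  exact/filter_uniq/iota_uniq.
by move=> i; rewrite mem_filter mem_index_iota /=; case: (boolP (i \in s)) => // /sB ->.
Qed.

Definition hdecomp r := proj1_sig (constructive_indefinite_description _ (hdecomp_exists r)).
Definition hbound r := (hdecomp r).1.
Definition hcomp r := (hdecomp r).2.

Lemma hcompP r : is_hdecomp r (hbound r) (hcomp r).
Proof. exact: proj2_sig (constructive_indefinite_description _ (hdecomp_exists r)). Qed.

Lemma hcomp_homog r j : Rn j (hcomp r j). Proof. by case: (hcompP r). Qed.

Lemma hcomp_eq0 r j : (hbound r <= j)%N -> hcomp r j = 0.
Proof. by case: (hcompP r) => _ H _; apply: H. Qed.

Lemma sum_hcomp r L : (hbound r <= L)%N -> r = \sum_(0 <= i < L) hcomp r i.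
Proof. by move=> rL; rewrite (big_nat_widen0 (@hcomp_eq0 r) rL); case: (hcompP r). Qed.

Lemma hcomp_unique r B c : is_hdecomp r B c -> hcomp r =1 c.
Proof.
case=> Hc c0 Er; case: (hcompP r) => Hc' c0' Er'.
pose L := maxn B (hbound r).
have sum0 : \sum_(i <- index_iota 0 L) (hcomp r i - c i) = 0.
  rewrite sumrB (big_nat_widen0 c0' (leq_maxr _ _)) (big_nat_widen0 c0 (leq_maxl _ _)).
  by rewrite -Er -Er' subrr.
case: HR => _ _ _ _ direct j; case: (ltnP j L) => jL.
  apply/eqP; rewrite -subr_eq0; apply/eqP.
  apply: (direct _ (fun i => hcomp r i - c i) (iota_uniq _ _) _ sum0).
    by move=> i; apply: gradeB.
  by rewrite mem_index_iota.
by rewrite c0 ?c0' //; apply: leq_trans jL; [apply: leq_maxr | apply: leq_maxl].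
Qed.

Lemma hcomp_homogE d y j : Rn d y -> hcomp y j = if j == d then y else 0.
Proof.
move=> Hy; apply: (@hcomp_unique _ d.+1 (fun i => if i == d then y else 0)); split.
- by move=> i; case: eqP => [->|_] //; apply: grade0.
- by move=> i; case: eqP => // ->; rewrite ltnn.
by rewrite big_nat_delta.
Qed.

Lemma hcomp0 j : hcomp 0 j = 0.
Proof. by rewrite (hcomp_homogE _ (grade0 0)); case: eqP. Qed.

Lemma hcompD a b j : hcomp (a + b) j = hcomp a j + hcomp b j.
Proof.
apply: (@hcomp_unique _ (maxn (hbound a) (hbound b)) (fun i => hcomp a i + hcomp b i)).
split.
- by move=> i; apply/gradeD/hcomp_homog/hcomp_homog.
- by move=> i; rewrite geq_max => /andP[ai bi]; rewrite !hcomp_eq0 ?addr0.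
by rewrite big_split -!sum_hcomp ?leq_maxl ?leq_maxr.
Qed.

Lemma hcompN a j : hcomp (- a) j = - hcomp a j.
Proof.
apply: (@hcomp_unique _ (hbound a) (fun i => - hcomp a i)); split.
- by move=> i; apply/gradeN/hcomp_homog.
- by move=> i ai; rewrite hcomp_eq0 ?oppr0.
by rewrite sumrN -sum_hcomp.
Qed.

Lemma hcompB a b j : hcomp (a - b) j = hcomp a j - hcomp b j.
Proof. by rewrite hcompD hcompN. Qed.

Lemma hcomp_sum (I : Type) (s : seq I) (P : pred I) (F : I -> R) j :
  hcomp (\sum_(i <- s | P i) F i) j = \sum_(i <- s | P i) hcomp (F i) j.
Proof.
apply: (big_ind2 (fun u v => hcomp u j = v)); first exact: hcomp0.
  by move=> ? ? ? ? <- <-; rewrite hcompD.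
by [].
Qed.

Lemma hcompMr a b d k : Rn d b ->
  hcomp (a * b) k = if (d <= k)%N then hcomp a (k - d) * b else 0.
Proof.
move=> Hb; pose c i := if (d <= i)%N then hcomp a (i - d) * b else 0.
apply: (@hcomp_unique _ (hbound a + d) c); split; rewrite /c.
- move=> i; case: ifP => di; last exact: grade0.
  by rewrite -{1}(subnK di); apply/gradeM/Hb/hcomp_homog.
- move=> i Hi; rewrite ifT ?hcomp_eq0 ?mul0r //; lia.
rewrite {1}(sum_hcomp (leqnn (hbound a))) mulr_suml (big_cat_nat (leq0n d) (leq_addl _ _)) /=.
rewrite [X in _ = X + _]big1_seq ?add0r; last first.
  by move=> i /andP[_]; rewrite mem_index_iota => /andP[_ id]; rewrite leqNgt id.
rewrite -{1}(add0n d) big_addn addnK.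
by apply: eq_bigr => i _; rewrite leq_addl addnK.
Qed.

Lemma hcompMl a b d k : Rn d b ->
  hcomp (b * a) k = if (d <= k)%N then b * hcomp a (k - d) else 0.
Proof. by move=> Hb; rewrite mulrC (hcompMr _ _ Hb) mulrC. Qed.

Lemma hcompM_top a b p q :
  (forall i, (p < i)%N -> hcomp a i = 0) -> (forall j, (q < j)%N -> hcomp b j = 0) ->
  hcomp (a * b) (p + q) = hcomp a p * hcomp b q /\
  forall k, (p + q < k)%N -> hcomp (a * b) k = 0.
Proof.
move=> a0 b0; pose L := maxn (hbound b) q.+1.
have Eab k : hcomp (a * b) k =
    \sum_(0 <= j < L) (if (j <= k)%N then hcomp a (k - j) * hcomp b j else 0).
  rewrite {1}(sum_hcomp (leq_maxl (hbound b) q.+1)) mulr_sumr hcomp_sum.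
  by apply: eq_bigr => j _; rewrite (hcompMr _ _ (hcomp_homog b j)).
split.
  rewrite Eab -(@big_nat_delta _ L q (hcomp a p * hcomp b q)) ?leq_maxr //.
  apply: eq_bigr => j _; case: (ltngtP j q) => jq.
  - by rewrite ifT ?a0 ?mul0r //; lia.
  - by rewrite b0 // mulr0; case: ifP.
  - by rewrite jq leq_addl addnK.
move=> k pqk; rewrite Eab big1_seq // => j _.
case: ifP => // jk; case: (leqP j q) => jq; last by rewrite b0 ?mulr0.
by rewrite a0 ?mul0r //; lia.
Qed.

Lemma hcompX_top a p : (forall i, (p < i)%N -> hcomp a i = 0) -> forall n,
  hcomp (a ^+ n) (n * p) = hcomp a p ^+ n /\
  forall k, (n * p < k)%N -> hcomp (a ^+ n) k = 0.
Proof.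
move=> a0; elim=> [|n [IHtop IHzero]].
  rewrite !expr0 mul0n (hcomp_homogE _ grade1); split=> // k k0.
  by rewrite (hcomp_homogE _ grade1) gtn_eqF.
by rewrite !exprS mulSn; have [-> ?] := hcompM_top a0 IHzero; rewrite IHtop.
Qed.

Definition htrunc r p := \sum_(0 <= i < p.+1) hcomp r i.

Lemma hcomp_htrunc r p i : hcomp (htrunc r p) i = if (i <= p)%N then hcomp r i else 0.
Proof.
rewrite /htrunc hcomp_sum (eq_bigr (fun k => if k == i then hcomp r i else 0)); last first.
  by move=> k _; rewrite (hcomp_homogE i (hcomp_homog r k)) eq_sym; case: eqP => // ->.
case: ifP => ip; first by rewrite big_nat_delta.
apply: big1_seq => k /andP[_]; rewrite mem_index_iota.
by case: eqP => // -> /andP[_]; rewrite ltnS ip.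
Qed.

(* The part of [y] that lands in degree [i] when multiplied by an element of
   degree [e]. *)
Definition hshift (y : R) (e i : nat) := if (e <= i)%N then hcomp y (i - e) else 0.

Lemma hshift_homog y e i : (e <= i)%N -> Rn (i - e) (hshift y e i).
Proof. by move=> ei; rewrite /hshift ei; apply: hcomp_homog. Qed.

Lemma hshift_lt y e i : (i < e)%N -> hshift y e i = 0.
Proof. by move=> ie; rewrite /hshift leqNgt ie. Qed.

Lemma hshift_eq0 y e i : (e + hbound y <= i)%N -> hshift y e i = 0.
Proof. by move=> Hi; rewrite /hshift; case: ifP => // _; apply: hcomp_eq0; lia. Qed.

Lemma sum_hshift y e L : (e + hbound y <= L)%N -> y = \sum_(0 <= i < L) hshift y e i.
Proof.
move=> HL; rewrite (big_cat_nat (leq0n e)) /=; last lia.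
rewrite big1_seq ?add0r; last first.
  by move=> i /andP[_]; rewrite mem_index_iota => /andP[_ /hshift_lt].
rewrite -{1}(add0n e) big_addn (eq_bigr (hcomp y)); first by apply: sum_hcomp; lia.
by move=> i _; rewrite /hshift leq_addl addnK.
Qed.

Lemma hcomp_hshiftM c y e C i l : (e <= C)%N -> (C <= i + l)%N ->
  hcomp (hshift c e i * y) (i + l - C) = hshift c e i * hshift y (C - e) l.
Proof.
move=> eC Cil; case: (leqP e i) => ei; last by rewrite hshift_lt // !mul0r hcomp0.
rewrite /hshift ei (hcompMl _ _ (hcomp_homog c (i - e))).
case: (leqP (C - e) l) => Cl.
  have -> : (i - e <= i + l - C)%N by lia.
  by have -> : (i + l - C - (i - e) = l - (C - e))%N by lia.
have -> : (i - e <= i + l - C)%N = false by apply/negbTE; lia.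
by rewrite mulr0.
Qed.

Lemma hshiftM_eq0 c y e C i l : (e <= C)%N -> (i + l < C)%N ->
  hshift c e i * hshift y (C - e) l = 0.
Proof.
move=> eC ilC; case: (leqP e i) => ei; last by rewrite hshift_lt // mul0r.
by rewrite (@hshift_lt y (C - e) l) ?mulr0 //; lia.
Qed.

Lemma hshiftM_homog c y e C i l : (e <= C)%N ->
  Rn (i + l - C) (hshift c e i * hshift y (C - e) l).
Proof.
move=> eC; case: (ltnP (i + l) C) => ilC; first by rewrite hshiftM_eq0 //; apply: grade0.
case: (leqP e i) => ei; last by rewrite hshift_lt // mul0r; apply: grade0.
case: (leqP (C - e) l) => Cl; last by rewrite (@hshift_lt y) // mulr0; apply: grade0.
have -> : (i + l - C = (i - e) + (l - (C - e)))%N by lia.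
by apply: gradeM; apply: hshift_homog.
Qed.

Definition homog_ideal (P : R -> Prop) := is_ideal P /\ forall r j, P r -> P (hcomp r j).

Lemma homog_ideal0 : homog_ideal (eq^~ 0).
Proof.
split; last by move=> r j ->; apply: hcomp0.
by split=> [|a b -> ->|r a ->]; rewrite ?addr0 ?mulr0.
Qed.

Section OneMinusX.
Variable x : R.
Hypothesis Hx : Rn 1 x.

Definition homogenize d r := \sum_(0 <= j < hbound r) x ^+ (d - j) * hcomp r j.

Lemma homogenize_homog d r : (hbound r <= d.+1)%N -> Rn d (homogenize d r).
Proof.
move=> rd; rewrite /homogenize big_seq; apply: grade_sum => j.
rewrite mem_index_iota => /andP[_ jr].
have {1}-> : d = ((d - j) * 1 + j)%N by lia.
by apply/gradeM/hcomp_homog/gradeX.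
Qed.

Lemma rmorph_homogenize (A : comPzRingType) (pi : {rmorphism R -> A}) d r :
  pi x = 1 -> pi (homogenize d r) = pi r.
Proof.
move=> pix; rewrite [in RHS](sum_hcomp (leqnn (hbound r))) !rmorph_sum.
by apply: eq_bigr => j _; rewrite rmorphM rmorphXn pix expr1n mul1r.
Qed.

(* Comparing components of [y - (1 - x) s] degree by degree: [s_k] lies in [P]
   below degree [d], and above it [s_(d+e) = x^e s_d] modulo [P]. *)
Lemma homog_1subx_torsion P d y s : homog_ideal P ->
  Rn d y -> P (y - (1 - x) * s) -> exists k, P (x ^+ k * y).
Proof.
move=> [HP Pcomp] Hy.
set z := y - (1 - x) * s => Pz.
have Ez k : hcomp z k = (if k == d then y else 0) - hcomp s k
    + (if (1 <= k)%N then hcomp s (k - 1) * x else 0).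
  rewrite /z hcompB (hcomp_homogE _ Hy) mulrBl mul1r hcompB mulrC (hcompMr _ _ Hx).
  ring.
have low k : (k < d)%N -> P (hcomp s k).
  elim: k => [|k IH] kd.
    have -> : hcomp s 0 = - hcomp z 0 by rewrite Ez (ltn_eqF kd) /=; ring.
    exact/(idealN HP)/Pcomp.
  have -> : hcomp s k.+1 = x * hcomp s k - hcomp z k.+1.
    by rewrite Ez (ltn_eqF kd) /= subSS subn0; ring.
  by apply: (idealB HP); [apply/(idealMl HP)/IH; lia | apply: Pcomp].
have high e : P (hcomp s (d + e) - x ^+ e * hcomp s d).
  elim: e => [|e IH]; first by rewrite addn0 expr0 mul1r subrr; apply: ideal0.
  have -> : hcomp s (d + e.+1) - x ^+ e.+1 * hcomp s d
      = x * (hcomp s (d + e) - x ^+ e * hcomp s d) - hcomp z (d + e.+1).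
    rewrite Ez.
    have -> : (d + e.+1 == d) = false by apply/negbTE; lia.
    have -> : (1 <= d + e.+1)%N by lia.
    have -> : (d + e.+1 - 1 = d + e)%N by lia.
    by rewrite exprS; ring.
  by apply: (idealB HP); [apply: idealMl | apply: Pcomp].
exists (hbound s).
have top : P (x ^+ hbound s * hcomp s d).
  by have := idealN HP (high (hbound s)); rewrite hcomp_eq0 ?leq_addl // sub0r opprK.
have -> : y = hcomp z d + hcomp s d - (if (1 <= d)%N then hcomp s (d - 1) * x else 0).
  by rewrite Ez eqxx; ring.
rewrite mulrBr mulrDr; apply: (idealB HP); first by apply/(idealD HP)/top/(idealMl HP)/Pcomp.
by apply: (idealMl HP); case: ifP => d1; [apply/(idealMr HP)/low; lia | apply: ideal0].
Qed.

End OneMinusX.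

Section HomogIdeal.
Variable I : R -> Prop.
Hypothesis HI : homog_ideal I.

Let idI := HI.1.

Lemma homog_ideal_hcomp r : (forall j, I (hcomp r j)) -> I r.
Proof.
by move=> Ir; rewrite (sum_hcomp (leqnn (hbound r))); apply: (ideal_sum idI) => j _.
Qed.

Lemma top_hcomp_notin r : ~ I r ->
  exists p, ~ I (hcomp r p) /\ forall j, (p < j)%N -> I (hcomp r j).
Proof.
move=> Nr; have exN : exists j, ~ I (hcomp r j).
  apply: NNPP => allI; apply/Nr/homog_ideal_hcomp => j.
  by apply: NNPP => Nj; apply: allI; exists j.
have [|p [Np top]] := exists_max_nat exN (B := hbound r).
  move=> j Nj; rewrite ltnNge; apply/negP => rj; apply: Nj.
  by rewrite hcomp_eq0 //; apply: ideal0.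
by exists p; split=> // j /top /NNPP.
Qed.

Lemma htrunc_top r p : (forall j, (p < j)%N -> I (hcomp r j)) -> I (r - htrunc r p).
Proof.
move=> top; apply: homog_ideal_hcomp => j; rewrite hcompB hcomp_htrunc.
by case: leqP => [_|/top]; rewrite ?subrr ?subr0 //; apply: ideal0.
Qed.

Lemma homog_mul_hcomp d c s j : Rn d c -> I (c * s) -> I (c * hcomp s j).
Proof. by move=> Hc /(HI.2 _ (d + j)); rewrite (hcompMl _ _ Hc) leq_addr addKn. Qed.

(* [hcomp r p * hcomp s q] is the top component of [htrunc r p * htrunc s q],
   which is congruent to [r * s] modulo [I]. *)
Lemma top_hcomp_mul r s p q : I (r * s) ->
  (forall i, (p < i)%N -> I (hcomp r i)) -> (forall j, (q < j)%N -> I (r * hcomp s j)) ->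
  I (hcomp r p * hcomp s q).
Proof.
move=> Irs topr tops; set r' := htrunc r p; set s' := htrunc s q.
have Irr' : I (r - r') by apply: htrunc_top.
have Ir's : I (r * (s - s')).
  rewrite (sum_hcomp (leq_maxl (hbound s) q.+1)) /s' /htrunc.
  rewrite (big_cat_nat (leq0n q.+1) (leq_maxr _ _)) /= addrAC subrr add0r.
  rewrite mulr_sumr big_seq; apply: (ideal_sum idI) => j.
  by rewrite mem_index_iota => /andP[/tops].
have Ir's' : I (r' * s').
  have -> : r' * s' = r * s - s * (r - r') - (r * (s - s') - (s - s') * (r - r')) by ring.
  by apply: (idealB idI); apply: (idealB idI) => //; apply: idealMl.
have r'0 i : (p < i)%N -> hcomp r' i = 0 by move=> pi; rewrite hcomp_htrunc leqNgt pi.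
have s'0 j : (q < j)%N -> hcomp s' j = 0 by move=> qj; rewrite hcomp_htrunc leqNgt qj.
have [top _] := hcompM_top r'0 s'0.
by have := HI.2 _ (p + q) Ir's'; rewrite top !hcomp_htrunc !leqnn.
Qed.

(* McCoy-style descent on [size S]: if [r * s_q] is outside [I] with [q]
   maximal, then [r * s_q] replaces [r], and the top index of [r] outside [I]
   leaves [S]. *)
Lemma homog_witness_mul_supp (S : seq nat) r s :
  (forall i, i \notin S -> I (hcomp r i)) -> I (r * s) -> ~ I r ->
  exists d c, [/\ Rn d c, ~ I c & I (c * s)].
Proof.
move: {2}(size S) (leqnn (size S)) => n.
elim: n S r => [|n IH] S r sizeS inS Irs Nr.
  case: (top_hcomp_notin Nr) => p [Np _]; case: Np; apply: inS.
  by move: sizeS; rewrite leqn0 => /nilP ->.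
have [p [Np topr]] := top_hcomp_notin Nr.
case: (classic (exists j, ~ I (r * hcomp s j))) => [bad_s|]; last first.
  move=> all_s; exists p, (hcomp r p); split => //; first exact: hcomp_homog.
  rewrite (sum_hcomp (leqnn (hbound s))) mulr_sumr; apply: (ideal_sum idI) => j _.
  have /(HI.2 _ (p + j)) : I (r * hcomp s j) by apply: NNPP => Nj; apply: all_s; exists j.
  by rewrite (hcompMr _ _ (hcomp_homog s j)) leq_addl addnK.
have [|q [Nq tops]] := exists_max_nat bad_s (B := hbound s).
  move=> j Nj; rewrite ltnNge; apply/negP => sj; apply: Nj.
  by rewrite hcomp_eq0 // mulr0; apply: ideal0.
have pS : p \in S by apply: NNPP => /negP /inS.
have Ipq : I (hcomp r p * hcomp s q).
  by apply: top_hcomp_mul => // j /tops /NNPP.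
pose S' := [seq (i + q)%N | i <- [seq i <- S | i != p]].
apply: (IH S' (r * hcomp s q)) => //.
- have : (0 < count (pred1 p) S)%N by rewrite -has_count has_pred1.
  move: sizeS; rewrite -(count_predC (pred1 p)) /S' size_map size_filter.
  have -> : count (fun i => i != p) S = count (predC (pred1 p)) S by apply: eq_count.
  lia.
- move=> k kS'; rewrite (hcompMr _ _ (hcomp_homog s q)); case: ifP => qk; last exact: ideal0.
  case: (eqVneq (k - q)%N p) => [-> //|kp]; apply/(idealMr idI)/inS/negP => kqS.
  by case/mapP: kS'; exists (k - q)%N; rewrite ?subnK // mem_filter kp.
- by rewrite mulrAC; apply: idealMr.
Qed.

Lemma homog_witness_mul r s : I (r * s) -> ~ I r ->
  exists d c, [/\ Rn d c, ~ I c & I (c * s)].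
Proof.
apply: (@homog_witness_mul_supp (iota 0 (hbound r))) => // i.
by rewrite mem_iota /= add0n -leqNgt => ri; rewrite hcomp_eq0 //; apply: ideal0.
Qed.

Lemma homog_witness_pow r n : I (r ^+ n) -> ~ I r ->
  exists d c, [/\ Rn d c, ~ I c & I (c ^+ n)].
Proof.
move=> Irn Nr; have [p [Np topr]] := top_hcomp_notin Nr.
exists p, (hcomp r p); split=> //; first exact: hcomp_homog.
set r' := htrunc r p.
have Ir'n : I (r' ^+ n).
  have -> : r' ^+ n = r ^+ n - (r ^+ n - r' ^+ n) by ring.
  by apply: (idealB idI) => //; apply/(ideal_subX idI)/htrunc_top.
have r'0 i : (p < i)%N -> hcomp r' i = 0 by move=> pi; rewrite hcomp_htrunc leqNgt pi.
have [top _] := hcompX_top r'0 n.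
by have := HI.2 _ (n * p) Ir'n; rewrite top hcomp_htrunc leqnn.
Qed.

End HomogIdeal.

Section Transfer.
Variables (I : R -> Prop) (A : comPzRingType) (pi : {rmorphism R -> A}) (J : A -> Prop).
Hypothesis HI : homog_ideal I.
Hypothesis IJ : forall r, I r -> J (pi r).
Hypothesis JI : forall d y, Rn d y -> J (pi y) -> I y.
Hypothesis homog_surj : forall a, exists d y, Rn d y /\ pi y = a.

Let idI := HI.1.

Lemma ideal1_transfer : ~ I 1 <-> ~ J 1.
Proof.
split=> [NI1 J1|NJ1 /IJ]; last by rewrite rmorph1.
by apply/NI1/(JI grade1); rewrite rmorph1.
Qed.

Lemma prime_ideal_transfer : prime_ideal I <-> prime_ideal J.
Proof.
split=> [[/ideal1_transfer NJ1 Ip] | [/ideal1_transfer NI1 Jp]]; split=> //.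
  move=> a b; have [d [y [Hy <-]]] := homog_surj a; have [e [z [Hz <-]]] := homog_surj b.
  by rewrite -rmorphM => /(JI (gradeM Hy Hz)) /Ip [] /IJ; [left | right].
move=> r s Irs; case: (classic (I r)) => [|Nr]; [by left | right].
have [d [c [Hc Nc Ics]]] := homog_witness_mul HI Irs Nr.
apply: (homog_ideal_hcomp HI) => j; apply: (JI (hcomp_homog s j)).
have /IJ := homog_mul_hcomp HI j Hc Ics.
by rewrite rmorphM => /Jp [/(JI Hc)|].
Qed.

Lemma primary_ideal_transfer : primary_ideal I <-> primary_ideal J.
Proof.
split=> [[/ideal1_transfer NJ1 Ip] | [/ideal1_transfer NI1 Jp]]; split=> //.
  move=> a b; have [d [y [Hy <-]]] := homog_surj a; have [e [z [Hz <-]]] := homog_surj b.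
  rewrite -rmorphM => /(JI (gradeM Hy Hz)) /Ip Iz Ny.
  have [n Izn] : exists n, I (z ^+ n) by apply: Iz => /IJ.
  by exists n; rewrite -rmorphXn; apply: IJ.
move=> r s Irs Nr; have [d [c [Hc Nc Ics]]] := homog_witness_mul HI Irs Nr.
have NJc : ~ J (pi c) by move/(JI Hc).
suff [n] : exists n, I ((\sum_(j <- index_iota 0 (hbound s)) hcomp s j) ^+ n).
  by rewrite -sum_hcomp //; exists n.
apply: (ideal_nil_sum idI) => j _.
have /IJ := homog_mul_hcomp HI j Hc Ics.
rewrite rmorphM => /Jp /(_ NJc) [n].
by rewrite -rmorphXn => /(JI (gradeX n (hcomp_homog s j))); exists n.
Qed.

Lemma radical_ideal_transfer : radical_ideal I <-> radical_ideal J.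
Proof.
split=> [Ir a n | Jr r n Irn].
  have [d [y [Hy <-]]] := homog_surj a.
  by rewrite -rmorphXn => /(JI (gradeX n Hy)) /Ir /IJ.
apply: NNPP => Nr; have [d [c [Hc Nc Icn]]] := homog_witness_pow HI Irn Nr.
by have := IJ Icn; rewrite rmorphXn => /Jr /(JI Hc).
Qed.

End Transfer.

End GradedRing.

Section GradedModule.
Variables (R : comPzRingType) (Rn : nat -> R -> Prop).
Variables (M : lmodType R) (Mn : int -> M -> Prop).
Hypothesis HR : graded_ring Rn.
Hypothesis HM : graded_module Rn Mn.

Local Notation hcomp := (hcomp HR).
Local Notation hbound := (hbound HR).
Local Notation hshift := (hshift HR).

Lemma mgrade0 n : Mn n 0. Proof. by case: HM. Qed.

Lemma mgradeB n u v : Mn n u -> Mn n v -> Mn n (u - v).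
Proof. by case: HM => _ H *; apply: H. Qed.

Lemma mgradeD n u v : Mn n u -> Mn n v -> Mn n (u + v).
Proof.
by move=> Hu Hv; rewrite -(opprK v) -(sub0r v); apply/mgradeB/mgradeB/Hv/mgrade0.
Qed.

Lemma mgradeZ (i : nat) (j : int) a u : Rn i a -> Mn j u -> Mn (i%:Z + j) (a *: u).
Proof. by case: HM => _ _ H *; apply: H. Qed.

Lemma mgrade_sum n (I : Type) (s : seq I) (P : pred I) (F : I -> M) :
  (forall i, P i -> Mn n (F i)) -> Mn n (\sum_(i <- s | P i) F i).
Proof.
by move=> HF; elim/big_rec: _ => [|i y Pi Hy]; [apply: mgrade0 | apply: mgradeD (HF _ Pi) Hy].
Qed.

(* The degrees [n t - D] of the generators are offset by [D] so that [n t] is a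
   natural number, comparable with the indices of components in [R]. *)
Lemma homog_generators : fin_gen M ->
  exists (T : finType) (m : T -> M) (n : T -> nat) (D : int),
    (forall t, Mn ((n t)%:Z - D) (m t)) /\
    forall v, exists c : T -> R, v = \sum_t c t *: m t.
Proof.
move=> [k [g span_g]]; case: HM => _ _ _ decomp _.
have decomp_g i : exists p : seq int * (int -> M),
    (forall e, Mn e (p.2 e)) /\ g i = \sum_(e <- p.1) p.2 e.
  by have [s [c [_ [Hc Eg]]]] := decomp (g i); exists (s, c).
have [P HP] := functional_choice _ decomp_g.
pose L := (\max_i size (P i).1)%N.
have HL i : (size (P i).1 <= L)%N by apply: (@leq_bigmax _ (fun i => size (P i).1)).
pose deg (p : 'I_k * 'I_L) := nth 0 (P p.1).1 p.2.
pose m (p : 'I_k * 'I_L) := if (p.2 < size (P p.1).1)%N then (P p.1).2 (deg p) else 0.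
pose D := (\max_p absz (deg p))%N.
have HD p : (absz (deg p) <= D)%N by apply: (@leq_bigmax _ (fun p => absz (deg p))).
exists ('I_k * 'I_L)%type, m, (fun p => absz (deg p + D%:Z)), D%:Z; split.
  move=> p; have -> : (absz (deg p + D%:Z))%:Z - D%:Z = deg p by have := HD p; lia.
  by rewrite /m; case: ifP => _; [apply: (HP p.1).1 | apply: mgrade0].
move=> v; have [c ->] := span_g v; exists (fun p : 'I_k * 'I_L => c p.1).
rewrite -(pair_bigA _ (fun i j => c i *: m (i, j))) /=.
apply: eq_bigr => i _; rewrite -scaler_sumr; congr (_ *: _).
rewrite (HP i).2.
rewrite (big_nth 0) big_mkord (big_ord_widen L (fun j => (P i).2 (nth 0 (P i).1 j)) (HL i)).
by rewrite big_mkcond.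
Qed.

Section Generators.
Variables (T : finType) (m : T -> M) (n : T -> nat) (D : int).
Hypothesis Hm : forall t, Mn ((n t)%:Z - D) (m t).

Definition hpart (c : T -> R) i := \sum_t hshift (c t) (n t) i *: m t.
Definition hpart_bound (c : T -> R) := (\max_t (n t + hbound (c t)))%N.

Lemma hpart_bound_ge c t : (n t + hbound (c t) <= hpart_bound c)%N.
Proof. exact: (@leq_bigmax _ (fun t => n t + hbound (c t))%N). Qed.

Lemma hpart_homog c i : Mn (i%:Z - D) (hpart c i).
Proof.
apply: mgrade_sum => t _; case: (leqP (n t) i) => ni.
  have -> : i%:Z - D = (i - n t)%N%:Z + ((n t)%:Z - D) by lia.
  by apply: mgradeZ; [apply: hshift_homog | apply: Hm].
by rewrite hshift_lt // scale0r; apply: mgrade0.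
Qed.

Lemma sum_hpart c : \sum_t c t *: m t = \sum_(0 <= i < hpart_bound c) hpart c i.
Proof.
rewrite /hpart exchange_big /=; apply: eq_bigr => t _.
by rewrite -scaler_suml -sum_hshift ?hpart_bound_ge.
Qed.

Lemma sum_hpart_split c (g : T -> R) : \sum_t c t * g t =
  \sum_(0 <= i < hpart_bound c) \sum_t hshift (c t) (n t) i * g t.
Proof.
rewrite exchange_big /=; apply: eq_bigr => t _.
by rewrite -mulr_suml -sum_hshift ?hpart_bound_ge.
Qed.

Lemma hpart_relation c : \sum_t c t *: m t = 0 -> forall i, hpart c i = 0.
Proof.
move=> rel i; case: (ltnP i (hpart_bound c)) => [ic|]; last first.
  move=> ci; apply: big1 => t _; rewrite hshift_eq0 ?scale0r //.
  exact: leq_trans (hpart_bound_ge c t) ci.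
case: HM => _ _ _ _ direct.
pose s := [seq i%:Z - D | i <- index_iota 0 (hpart_bound c)].
pose w e := if 0 <= e + D then hpart c (absz (e + D)) else 0.
have wE j : w (j%:Z - D) = hpart c j by rewrite /w subrK lez_nat absz_nat.
have uniq_s : uniq s by rewrite map_inj_uniq ?iota_uniq // => j k; lia.
have Hw e : Mn e (w e).
  rewrite /w; case: ifP => e0; last exact: mgrade0.
  have {1}-> : e = (absz (e + D))%:Z - D by lia.
  exact: hpart_homog.
rewrite -wE; apply: (direct s w uniq_s Hw); last by apply/mapP; exists i; rewrite ?mem_index_iota.
by rewrite big_map (eq_bigr _ (fun j _ => wE j)) -sum_hpart.
Qed.

Hypothesis span : forall v, exists c : T -> R, v = \sum_t c t *: m t.

Lemma hom_of_homog_relations (g : T -> R) :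
  (forall c i, hpart c i = 0 -> \sum_t hshift (c t) (n t) i * g t = 0) ->
  exists phi : M -> R, is_hom phi /\ forall c, phi (\sum_t c t *: m t) = \sum_t c t * g t.
Proof.
move=> homog_rel; apply: hom_of_generators => // c /hpart_relation rel.
by rewrite sum_hpart_split big1 // => i _; apply/homog_rel/rel.
Qed.

End Generators.

(* Every linear form on [M] is a finite sum of the homogeneous linear forms
   [F l], defined on the generators by taking suitable components. *)
Lemma hcomp_hom_trace (f : M -> R) v j : fin_gen M -> is_hom f ->
  trace_ideal M (hcomp (f v) j).
Proof.
move=> fgM Hf; have [T [m [n [D [Hm span]]]]] := homog_generators fgM.
pose C := (\max_t n t)%N.
have nC t : (n t <= C)%N by apply: (@leq_bigmax _ n).
pose g l t := hshift (f (m t)) (C - n t) l.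
have part l : exists F : M -> R,
    is_hom F /\ forall c, F (\sum_t c t *: m t) = \sum_t c t * g l t.
  apply: (hom_of_homog_relations Hm span) => c i rel.
  case: (ltnP (i + l) C) => ilC; first by apply: big1 => t _; apply: hshiftM_eq0.
  transitivity (hcomp (f (hpart m n c i)) (i + l - C)); last by rewrite rel (hom0 Hf) hcomp0.
  rewrite (hom_sum _ _ _ Hf) hcomp_sum; apply: eq_bigr => t _.
  by rewrite (homZ _ _ Hf) hcomp_hshiftM.
have [F HF] := functional_choice _ part.
have [c ->] := span v.
pose L := (\max_t (C - n t + hbound (f (m t))))%N.
have f_sum : f (\sum_t c t *: m t) = \sum_(0 <= l < L) F l (\sum_t c t *: m t).
  rewrite (hom_sum _ _ _ Hf); under [RHS]eq_bigr => l _ do rewrite (HF l).2.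
  rewrite exchange_big /=; apply: eq_bigr => t _.
  rewrite (homZ _ _ Hf) -mulr_sumr -sum_hshift //.
  exact: (@leq_bigmax _ (fun t => C - n t + hbound (f (m t)))%N).
rewrite f_sum hcomp_sum; apply: (ideal_sum (trace_ideal_ideal M)) => l _.
rewrite (sum_hpart _ n) (hom_sum _ _ _ (HF l).1) hcomp_sum.
apply: (ideal_sum (trace_ideal_ideal M)) => i _.
have homog : Rn (i + l - C) (F l (hpart m n c i)).
  by rewrite /hpart (HF l).2; apply: (grade_sum HR) => t _; apply: hshiftM_homog.
rewrite (hcomp_homogE _ _ homog); case: eqP => _; first exact/trace_hom/(HF l).1.
exact: ideal0 (trace_ideal_ideal M).
Qed.

Lemma trace_ideal_homog : fin_gen M -> homog_ideal HR (trace_ideal M).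
Proof.
move=> fgM; split=> [|_ j [k [f [v [Hf ->]]]]]; first exact: trace_ideal_ideal.
by rewrite hcomp_sum; apply: (ideal_sum (trace_ideal_ideal M)) => i _; apply: hcomp_hom_trace.
Qed.

End GradedModule.

Section Reduction.
Variables (R : comPzRingType) (Rn : nat -> R -> Prop) (M : lmodType R)
  (Mn : int -> M -> Prop) (x : R) (A : comPzRingType) (pi : {rmorphism R -> A})
  (N : lmodType A) (q : M -> N).
Hypothesis noethR : noetherian R.
Hypothesis HR : graded_ring Rn.
Hypothesis HM : graded_module Rn Mn.
Hypothesis fgM : fin_gen M.
Hypothesis Hx : Rn 1 x.
Hypothesis pi_surj : forall a : A, exists r, pi r = a.
Hypothesis ker_pi : forall r, pi r = 0 <-> exists s, r = (1 - x) * s.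
Hypothesis qD : forall u v, q (u + v) = q u + q v.
Hypothesis qZ : forall r u, q (r *: u) = pi r *: q u.
Hypothesis q_surj : forall w : N, exists u, q u = w.
Hypothesis ker_q : forall u, q u = 0 <-> exists v, u = (1 - x) *: v.

Local Notation hcomp := (hcomp HR).
Local Notation hbound := (hbound HR).
Local Notation hshift := (hshift HR).
Local Notation hpart := (hpart HR).

Lemma pi_x : pi x = 1.
Proof.
have : pi (1 - x) = 0 by apply/ker_pi; exists 1; rewrite mulr1.
by rewrite rmorphB rmorph1 => /eqP; rewrite subr_eq0 => /eqP <-.
Qed.

Lemma q0 : q 0 = 0.
Proof. by apply: (addrI (q 0)); rewrite -qD !addr0. Qed.

Lemma qB u v : q (u - v) = q u - q v.
Proof. by rewrite qD -scaleN1r qZ rmorphN rmorph1 scaleN1r. Qed.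

Lemma q_sum (I : Type) (s : seq I) (P : pred I) (F : I -> M) :
  q (\sum_(i <- s | P i) F i) = \sum_(i <- s | P i) q (F i).
Proof.
apply: (big_ind2 (fun u v => q u = v)); first exact: q0.
  by move=> ? ? ? ? <- <-; rewrite qD.
by [].
Qed.

Lemma hom_descends (f : M -> R) : is_hom f ->
  exists g : N -> A, is_hom g /\ forall u, g (q u) = pi (f u).
Proof.
move=> Hf; have well_def u u' : q u = q u' -> pi (f u) = pi (f u').
  move=> E; have /ker_q [w Hw] : q (u - u') = 0 by rewrite qB E subrr.
  apply/eqP; rewrite -subr_eq0 -rmorphB -(homB _ _ Hf) Hw (homZ _ _ Hf).
  by apply/eqP/ker_pi; exists (f w).
have [U HU] := functional_choice _ q_surj.
exists (fun w => pi (f (U w))); split; last by move=> u; apply: well_def; rewrite HU.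
move=> a w1 w2; have [r <-] := pi_surj a.
have -> : pi r *: w1 + w2 = q (r *: U w1 + U w2) by rewrite qD qZ !HU.
by rewrite (well_def _ (r *: U w1 + U w2)) ?HU // Hf rmorphD rmorphM.
Qed.

Lemma ext_trace_sub a : ext_ideal pi (trace_ideal M) a -> trace_ideal N a.
Proof.
move=> [k [b [r [Ir ->]]]]; apply: (ideal_sum (trace_ideal_ideal N)) => i _.
apply: (idealMl (trace_ideal_ideal N)); have [l [f [v [Hf ->]]]] := Ir i.
rewrite rmorph_sum; apply: (ideal_sum (trace_ideal_ideal N)) => j _.
by have [g [Hg <-]] := hom_descends (Hf j); apply: trace_hom.
Qed.

Lemma pi_comb (T : finType) (m : T -> M) (h : N -> A) (b c : T -> R) :
  is_hom h -> (forall t, pi (b t) = h (q (m t))) ->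
  pi (\sum_t c t * b t) = h (q (\sum_t c t *: m t)).
Proof.
move=> Hh Hb; rewrite rmorph_sum q_sum (hom_sum _ _ _ Hh); apply: eq_bigr => t _.
by rewrite rmorphM Hb qZ (homZ _ _ Hh).
Qed.

(* Lift the values [h (q m_t)] on homogeneous generators to homogeneous [a_t] of
   degree [deg m_t + E]; the homogeneous relations are then only violated by
   [x]-torsion, which [x ^+ K] kills. *)
Lemma hom_lifts (h : N -> A) : is_hom h ->
  exists phi : M -> R, is_hom phi /\ forall u, pi (phi u) = h (q u).
Proof.
move=> Hh; have [T [m [n [D [Hm span]]]]] := homog_generators HM fgM.
have [r Hr] := functional_choice _ (fun t => pi_surj (h (q (m t)))).
pose E := (\max_t hbound (r t))%N.
have rE t : (hbound (r t) <= E)%N by apply: (@leq_bigmax _ (fun t => hbound (r t))).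
pose a t := homogenize HR x (n t + E) (r t).
have Ha t : Rn (n t + E) (a t) by apply: homogenize_homog => //; have := rE t; lia.
have pi_a t : pi (a t) = h (q (m t)) by rewrite rmorph_homogenize ?pi_x.
have [K HK] := torsion_bounded x noethR.
have rel c i : hpart m n c i = 0 -> \sum_t hshift (c t) (n t) i * (x ^+ K * a t) = 0.
  move=> hrel; set Y := \sum_t hshift (c t) (n t) i * a t.
  have HY : Rn (i + E) Y.
    apply: (grade_sum HR) => t _; case: (leqP (n t) i) => ni.
      have -> : (i + E = (i - n t) + (n t + E))%N by lia.
      by apply: (gradeM HR); [apply: hshift_homog | apply: Ha].
    by rewrite hshift_lt // mul0r; apply: grade0.
  have /ker_pi [s Hs] : pi Y = 0 by rewrite (pi_comb _ Hh pi_a) -/(hpart m n c i) hrel q0 hom0.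
  have [|k Hk] := homog_1subx_torsion Hx (homog_ideal0 HR) HY (s := s); first by rewrite Hs subrr.
  by under eq_bigr do rewrite mulrCA; rewrite -mulr_sumr HK //; exists k.
have [phi [Hphi phiE]] := hom_of_homog_relations HM Hm span rel.
exists phi; split=> // u; have [c ->] := span u.
by rewrite phiE; apply: pi_comb => // t; rewrite rmorphM rmorphXn pi_x expr1n mul1r.
Qed.

Lemma trace_ext_sub a : trace_ideal N a -> ext_ideal pi (trace_ideal M) a.
Proof.
move=> [k [h [w [Hh ->]]]].
have lift i : exists p : (M -> R) * M, is_hom p.1 /\ pi (p.1 p.2) = h i (w i).
  have [phi [Hphi Hpq]] := hom_lifts (Hh i); have [u <-] := q_surj (w i).
  by exists (phi, u); split; rewrite //= Hpq.
have [P HP] := functional_choice _ lift.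
exists k, (fun _ => 1), (fun i => (P i).1 (P i).2); split.
  by move=> i; apply/trace_hom/(HP i).1.
by apply: eq_bigr => i _; rewrite mul1r (HP i).2.
Qed.

Lemma ext_trace_iff a : ext_ideal pi (trace_ideal M) a <-> trace_ideal N a.
Proof. by split; [apply: ext_trace_sub | apply: trace_ext_sub]. Qed.

Lemma trace_pi r : trace_ideal M r -> trace_ideal N (pi r).
Proof.
move=> Ir; apply/ext_trace_iff; exists 1%N, (fun _ => 1), (fun _ => r).
by rewrite big_ord1 mul1r.
Qed.

Lemma homog_lift a : exists d y, Rn d y /\ pi y = a.
Proof.
have [r <-] := pi_surj a; exists (hbound r), (homogenize HR x (hbound r) r).
by split; [apply: homogenize_homog | rewrite rmorph_homogenize ?pi_x].
Qed.

Hypothesis x_nzd : forall r, trace_ideal M (x * r) -> trace_ideal M r.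

Lemma homog_trace_contract d y : Rn d y -> trace_ideal N (pi y) -> trace_ideal M y.
Proof.
move=> Hy /ext_trace_iff [k [b [r [Ir Epi]]]].
have [b' Hb'] := functional_choice _ (fun i => pi_surj (b i)).
have trM := trace_ideal_ideal M.
have /ker_pi [s Hs] : pi (y - \sum_i b' i * r i) = 0.
  rewrite rmorphB rmorph_sum Epi; apply/eqP; rewrite subr_eq0; apply/eqP.
  by apply: eq_bigr => i _; rewrite rmorphM Hb'.
have [|n] := homog_1subx_torsion Hx (trace_ideal_homog HR HM fgM) Hy (s := s).
  rewrite -Hs opprB addrC subrK; apply: (ideal_sum trM) => i _; exact: idealMl.
elim: n => [|n IH]; first by rewrite expr0 mul1r.
by rewrite exprS -mulrA => /x_nzd /IH.
Qed.

Lemma trace_ideal_transfer :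
  [/\ prime_ideal (trace_ideal M) <-> prime_ideal (trace_ideal N),
      primary_ideal (trace_ideal M) <-> primary_ideal (trace_ideal N) &
      radical_ideal (trace_ideal M) <-> radical_ideal (trace_ideal N)].
Proof.
have homI := trace_ideal_homog HR HM fgM.
split; [exact: (prime_ideal_transfer homI trace_pi homog_trace_contract homog_lift)
       | exact: (primary_ideal_transfer homI trace_pi homog_trace_contract homog_lift)
       | exact: (radical_ideal_transfer homI trace_pi homog_trace_contract homog_lift)].
Qed.

End Reduction.

Unset Implicit Arguments. Set Strict Implicit. Set Printing Implicit Defensive.

Theorem proposition2p4
    (R : comPzRingType) (Rn : nat -> R -> Prop) (M : lmodType R)
    (Mn : int -> M -> Prop) (x : R)
    (A : comPzRingType) (pi : {rmorphism R -> A})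
    (N : lmodType A) (q : M -> N) :
  noetherian R -> graded_ring Rn -> graded_module Rn Mn -> fin_gen M ->
  Rn 1%N x -> (forall n : nat, x ^+ n != 0) ->
  (forall a : A, exists r, pi r = a) ->
  (forall r, pi r = 0 <-> exists s, r = (1 - x) * s) ->
  (forall u v, q (u + v) = q u + q v) ->
  (forall (r : R) (u : M), q (r *: u) = pi r *: q u) ->
  (forall n : N, exists u, q u = n) ->
  (forall u, q u = 0 <-> exists v, u = (1 - x) *: v) ->
  (forall a : A, ext_ideal pi (@trace_ideal R M) a <-> @trace_ideal A N a) /\
  ((forall r : R, @trace_ideal R M (x * r) -> @trace_ideal R M r) ->
   [/\ prime_ideal (@trace_ideal R M) <-> prime_ideal (@trace_ideal A N),
        primary_ideal (@trace_ideal R M) <-> primary_ideal (@trace_ideal A N) &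
        radical_ideal (@trace_ideal R M) <-> radical_ideal (@trace_ideal A N)]).
Proof.
move=> noethR HR HM fgM Hx _ pi_surj ker_pi qD qZ q_surj ker_q.
split=> [a | x_nzd].
  exact: (ext_trace_iff noethR HR HM fgM Hx pi_surj ker_pi qD qZ q_surj ker_q).
exact: (trace_ideal_transfer noethR HR HM fgM Hx pi_surj ker_pi qD qZ q_surj ker_q x_nzd).
Qed.
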